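(* Let $r\ge1$ and let $G_r(t,u,v,z)=\sum_w t^{\mathrm{length}(w)}u^{\mathrm{asc}(w)}v^{\mathrm{last}(w)}z^{\mathrm{zeros}(w)}$, summed over all ascent sequences $w=(x_1,\dots,x_n)$ with $n\ge r+1$, $x_1=\dots=x_r=0$ and $x_{r+1}=1$. Then $$(v-1-tv(1-u))\,G_r(t,u,v,z)=(v-1)t^{r+1}uvz^r+t((v-1)z-v)\,G_r(t,u,1,z)+tuv^2\,G_r(t,uv,1,z).$$
   Context: An ascent sequence of length $n$ is a sequence $(x_1,\dots,x_n)$ of nonnegative integers with $x_1=0$ and $x_i\in[0,1+\mathrm{asc}(x_1,\dots,x_{i-1})]$ for $2\le i\le n$, where $\mathrm{asc}(y_1,\dots,y_k)=|\{1\le j<k: y_j<y_{j+1}\}|$. For an ascent sequence $w$: $\mathrm{length}(w)$ is its number of entries, $\mathrm{asc}(w)$ its number of ascents, $\mathrm{last}(w)$ its rightmost entry, $\mathrm{zeros}(w)$ its number of entries equal to 0. $G_r$ is a formal power series in $t$ with polynomial coefficients in $u,v,z$; $G_r(t,u,1,z)$ and $G_r(t,uv,1,z)$ denote the substitutions $v\mapsto1$ and $(u,v)\mapsto(uv,1)$ respectively. *)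

From mathcomp Require Import all_boot all_order all_algebra.
Set Implicit Arguments. Unset Strict Implicit. Unset Printing Implicit Defensive.
Import GRing.Theory.
Local Open Scope ring_scope.

Fixpoint asc (s : seq nat) : nat :=
  match s with
  | x :: ((y :: _) as t) => ((x < y)%N : nat) + asc t
  | _ => 0%N
  end.

(* ascent sequence: x_1 = 0 and x_i <= 1 + asc(x_1..x_{i-1}) for 2 <= i <= n
   (indices here are 0-based: entry i, prefix take i s). *)
Definition ascent_seq (s : seq nat) : bool :=
  ((s == [::]) || (head 0%N s == 0%N)) &&
  all (fun i => nth 0%N s i <= (asc (take i s)).+1)%N (iota 1 (size s).-1).

Definition last_entry (s : seq nat) : nat := last 0%N s.
Definition zeros (s : seq nat) : nat := count (pred1 0%N) s.

Definition Gcond (r : nat) (s : seq nat) : bool :=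
  [&& (r < size s)%N, all (pred1 0%N) (take r s) & nth 0%N s r == 1%N].

(* Coefficient of t^n in G_r(t,u,v,z), evaluated at u v z in a commutative ring R.
   Every ascent sequence of length n has all entries < n, so ranging over
   n-tuples of 'I_n enumerates all ascent sequences of length n. *)
Definition Gcoef (R : comNzRingType) (r n : nat) (u v z : R) : R :=
  \sum_(w : n.-tuple 'I_n | ascent_seq (map val w) && Gcond r (map val w))
     u ^+ asc (map val w) * v ^+ last_entry (map val w) * z ^+ zeros (map val w).

(* Coefficient of t^n in t * G_r(t,u,v,z). *)
Definition tGcoef (R : comNzRingType) (r n : nat) (u v z : R) : R :=
  match n with 0%N => 0 | m.+1 => Gcoef r m u v z end.

From mathcomp Require Import all_boot all_order all_algebra.
From mathcomp Require Import ring.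
Import GRing.Theory.
Local Open Scope ring_scope.

(* Every ascent sequence of length n+1 is uniquely [rcons s x] with [s] an
   ascent sequence of length n and [x <= asc s + 1].  Appending [x] adds one
   ascent iff [x > last s] and one zero iff [x = 0], so the weight
   [u^asc v^last z^zeros] summed over all extensions of [s] is a pair of
   geometric sums in [v], split at [last s]; multiplied by [v - 1] they
   telescope into terms depending on [s] only through its weights at [v = 1]
   and at [(u, v) := (u v, 1)].  For [n > r] the extensions of sequences in
   [G_r] are exactly the sequences of [G_r] of length [n+1]; the only
   sequence of [G_r] not obtained this way is [0^r 1], the source of the
   term [t^(r+1)]. *)

Lemma asc_rcons a t x :
  asc (rcons (a :: t) x) = (asc (a :: t) + (last a t < x))%N.
Proof.
elim: t a => [|b t IH] a; first by rewrite /= addn0.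
rewrite rcons_cons.
change (asc (a :: rcons (b :: t) x)) with ((a < b) + asc (rcons (b :: t) x))%N.
by rewrite IH addnA.
Qed.

Lemma zeros_rcons s x : zeros (rcons s x) = (zeros s + (x == 0%N))%N.
Proof. by rewrite /zeros -cats1 count_cat /= addn0. Qed.

Lemma asc_leq_size s : (asc s <= (size s).-1)%N.
Proof.
elim: s => [|a [|b t] IH] //=.
by rewrite -[(size t).+1]add1n leq_add // leq_b1.
Qed.

Lemma asc_nseq0 k : asc (nseq k 0%N) = 0%N.
Proof. by elim: k => [|[|k] IH]. Qed.

Lemma nseqS0 k : nseq k.+1 0%N = rcons (nseq k 0%N) 0%N.
Proof. by rewrite -cats1 -[[:: 0%N]]/(nseq 1 0%N) -nseqD addn1. Qed.

Lemma last_nseq0 k : last 0%N (nseq k 0%N) = 0%N.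
Proof. by case: k => [|k] //; rewrite nseqS0 last_rcons. Qed.

Lemma ascent_seq_rcons s x :
  ascent_seq (rcons s x) =
  ascent_seq s && (if s is _ :: _ then (x <= (asc s).+1)%N else x == 0%N).
Proof.
case: s => [|a t]; first by rewrite /ascent_seq /= andbT.
rewrite /ascent_seq size_rcons -andbA; congr andb.
rewrite [size _]/= succnK -[(size t).+1]addn1 iotaD all_cat all_seq1 add1n.
rewrite nth_rcons ltnn eqxx -cats1 -[(size t).+1]/(size (a :: t)).
rewrite take_size_cat //.
congr andb; rewrite addn1 succnK.
apply: eq_in_all => i; rewrite mem_iota add1n => /andP [_ hi].
by rewrite nth_cat hi takel_cat // ltnW.
Qed.

Lemma ascent_seq_nseq0 k : ascent_seq (nseq k 0%N).
Proof.
elim: k => [|k IH] //.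
by rewrite nseqS0 ascent_seq_rcons IH; case: k {IH}.
Qed.

Lemma ascent_seq_last a t :
  ascent_seq (a :: t) -> (last a t <= (asc (a :: t)).+1)%N.
Proof.
case/lastP: t => [|t y]; first by rewrite /ascent_seq /= andbT => /eqP ->.
rewrite last_rcons -rcons_cons ascent_seq_rcons => /andP [_ hy].
by apply: (leq_trans hy); rewrite asc_rcons ltnS leq_addr.
Qed.

Lemma ascent_seq_lt_size s : ascent_seq s -> all (fun x => x < size s)%N s.
Proof.
elim/last_ind: s => [|s x IH] //.
rewrite ascent_seq_rcons all_rcons size_rcons => /andP [hs hx].
apply/andP; split.
  case: s {IH hs} hx => [/eqP -> //|a t hx].
  by apply: (leq_trans hx); rewrite ltnS (asc_leq_size (a :: t)).
by apply/allP => y /(allP (IH hs)) /ltnW.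
Qed.

Lemma map_val_pmap_insub n s : all (fun x => x < n)%N s ->
  map val (pmap (insub : nat -> option 'I_n) s) = s.
Proof.
elim: s => [|x s IH] //= /andP [hx hs].
by rewrite (insubT (fun x => x < n)%N hx) /= IH.
Qed.

(* [x] may be appended to [s] iff [x < ext_bound s]. *)
Definition ext_bound (s : seq nat) : nat :=
  if s is _ :: _ then (asc s).+2 else 1%N.

Fixpoint ascent_seqs n : seq (seq nat) :=
  if n is m.+1 then
    [seq rcons s x | s <- ascent_seqs m, x <- iota 0 (ext_bound s)]
  else [:: [::]].

Lemma mem_iota_ext_bound s x :
  (x \in iota 0 (ext_bound s)) =
  (if s is _ :: _ then (x <= (asc s).+1)%N else x == 0%N).
Proof.
by rewrite mem_iota add0n; case: s => [|a t] //=; rewrite ltnS leqn0.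
Qed.

Lemma mem_ascent_seqs n s :
  (s \in ascent_seqs n) = (size s == n) && ascent_seq s.
Proof.
elim: n s => [|n IH] s; first by case: s.
case/lastP: s => [|s x]; first by apply/allpairsPdep => -[[|? ?] [? []]].
rewrite size_rcons eqSS ascent_seq_rcons andbA -IH -mem_iota_ext_bound.
apply/allpairsPdep/andP => [[s' [x' [hs hx /rcons_inj [-> ->]]]] //|[hs hx]].
by exists s, x.
Qed.

Lemma uniq_ascent_seqs n : uniq (ascent_seqs n).
Proof.
elim: n => [|n IH] //=.
apply: allpairs_uniq_dep => // [s _|[s1 x1] [s2 x2] _ _ /rcons_inj [-> ->] //].
exact: iota_uniq.
Qed.

Lemma ascent_seqs_succ (R : nmodType) (G : seq nat -> R) n :
  \sum_(s <- ascent_seqs n.+1) G s =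
  \sum_(s <- ascent_seqs n) \sum_(0 <= x < ext_bound s) G (rcons s x).
Proof.
rewrite [ascent_seqs _]/= big_allpairs_dep.
by apply: eq_bigr => s _; rewrite /index_iota subn0.
Qed.

Lemma Gcond_rcons s x r :
  (r < size s)%N -> Gcond r (rcons s x) = Gcond r s.
Proof.
move=> hr; rewrite /Gcond size_rcons hr ltnW // nth_rcons hr.
by rewrite -cats1 takel_cat // ltnW.
Qed.

Lemma Gcond_rcons_size s x r : size s = r ->
  Gcond r (rcons s x) = all (pred1 0%N) s && (x == 1%N).
Proof.
move=> <-.
by rewrite /Gcond size_rcons ltnSn -cats1 take_size_cat // nth_cat ltnn subnn.
Qed.

Section Coefficients.

Variable R : comNzRingType.

Definition weight (u v z : R) (s : seq nat) : R :=
  u ^+ asc s * v ^+ last_entry s * z ^+ zeros s.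

Lemma Gcoef_ascent_seqs r n (u v z : R) :
  Gcoef r n u v z = \sum_(s <- ascent_seqs n | Gcond r s) weight u v z s.
Proof.
rewrite /Gcoef -(big_map (fun w : n.-tuple 'I_n => map val w)
  (fun s => ascent_seq s && Gcond r s) (weight u v z)) -big_filter_cond.
apply/perm_big/uniq_perm; last 1 first.
- move=> s; rewrite mem_filter mem_ascent_seqs.
  apply/andP/andP => -[hs hm]; split => //.
    by case/mapP: hm => w _ ->; rewrite size_map size_tuple.
  have hlt := ascent_seq_lt_size _ hm; rewrite (eqP hs) in hlt.
  have hw : size (pmap (insub : nat -> option 'I_n) s) == n.
    by rewrite size_pmap_sub; move: hlt; rewrite all_count => /eqP ->.
  apply/mapP; exists (Tuple hw); first by rewrite mem_index_enum.
  by rewrite /= map_val_pmap_insub.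
- apply: filter_uniq; rewrite map_inj_uniq ?index_enum_uniq //.
  by move=> w1 w2 /(inj_map val_inj) /val_inj.
- exact: uniq_ascent_seqs.
Qed.

Lemma Gcoef_small r n (u v z : R) : (n <= r)%N -> Gcoef r n u v z = 0.
Proof.
move=> hn; rewrite Gcoef_ascent_seqs big_seq_cond big1 // => s.
rewrite mem_ascent_seqs => /andP [/andP [/eqP hs _]].
by rewrite /Gcond ltnNge hs hn.
Qed.

(* The only sequence of [G_r] of length [r+1] is [0^r 1]. *)
Lemma Gcoef_base r (u v z : R) : Gcoef r.+1 r.+2 u v z = u * v * z ^+ r.+1.
Proof.
rewrite Gcoef_ascent_seqs big_mkcond ascent_seqs_succ.
rewrite (bigD1_seq (nseq r.+1 0%N) _ (uniq_ascent_seqs _)); last first.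
  by rewrite mem_ascent_seqs size_nseq eqxx ascent_seq_nseq0.
set others := \big[_/_]_(s <- ascent_seqs r.+1 | _) _.
have -> : others = 0.
  rewrite /others big_seq_cond; apply: big1 => s.
  rewrite mem_ascent_seqs => /andP [/andP [/eqP hs _] hne].
  apply: big1 => x _; rewrite Gcond_rcons_size //.
  by case: all_pred1P => // hz; rewrite hs in hz; rewrite hz eqxx in hne.
rewrite Monoid.mulm1.
have -> : ext_bound (nseq r.+1 0%N) = 2%N by rewrite /ext_bound asc_nseq0.
rewrite 2?big_nat_recr // big_geq //.
rewrite Monoid.mul1m !Gcond_rcons_size ?size_nseq // all_pred1_nseq eqxx.
rewrite andTb andbT (_ : (0 == 1)%N = false) // Monoid.mul1m.
rewrite /weight /last_entry last_rcons zeros_rcons /zeros count_nseq.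
rewrite [nseq r.+1 0%N]/= asc_rcons -[0%N :: nseq r 0%N]/(nseq r.+1 0%N).
by rewrite asc_nseq0 last_nseq0 /= mul1n addn0 !expr1.
Qed.

Lemma Gsum_succ r m (f : seq nat -> R) : (r < m)%N ->
  \sum_(s <- ascent_seqs m.+1 | Gcond r s) f s =
  \sum_(s <- ascent_seqs m | Gcond r s)
    \sum_(0 <= x < ext_bound s) f (rcons s x).
Proof.
move=> hrm; rewrite big_mkcond ascent_seqs_succ [RHS]big_mkcond.
rewrite big_seq [RHS]big_seq; apply: eq_bigr => s.
rewrite mem_ascent_seqs => /andP [/eqP hs _].
have hr : (r < size s)%N by rewrite hs.
case: ifP => hg; [apply: eq_bigr | apply: big1] => x _;
  by rewrite Gcond_rcons // hg.
Qed.

Lemma geometric_ext_sum (u v z : R) (a c l k : nat) :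
  (v - 1) *
    \sum_(0 <= x < k.+1) u ^+ (a + (l < x)) * v ^+ x * z ^+ (c + (x == 0%N))
  = u ^+ a * z ^+ c * ((z - 1) * (v - 1) + v ^+ (minn k.+1 l.+1) - 1
                       + u * (v ^+ k.+1 - v ^+ (minn k.+1 l.+1))).
Proof.
elim: k => [|k IH].
  rewrite big_nat1 minnSS min0n /= !addn0 !expr1 expr0.
  by rewrite addn1 exprS; ring.
rewrite big_nat_recr //= mulrDr IH /= addn0.
have [hkl|hlk] := leqP k.+1 l.
  have -> : minn k.+1 l.+1 = k.+1 by apply/minn_idPl; rewrite ltnW.
  have -> : minn k.+2 l.+1 = k.+2 by apply/minn_idPl.
  by rewrite addn0 !exprS; ring.
have -> : minn k.+1 l.+1 = l.+1 by apply/minn_idPr.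
have -> : minn k.+2 l.+1 = l.+1 by apply/minn_idPr; rewrite ltnW.
by rewrite addn1 !exprS; ring.
Qed.

Lemma ext_weight_sum (u v z : R) a t : ascent_seq (a :: t) ->
  (v - 1) * \sum_(0 <= x < ext_bound (a :: t)) weight u v z (rcons (a :: t) x)
  - v * (1 - u) * weight u v z (a :: t)
  = ((v - 1) * z - v) * weight u 1 z (a :: t)
    + u * v ^+ 2 * weight (u * v) 1 z (a :: t).
Proof.
move=> /ascent_seq_last hl.
have -> : ext_bound (a :: t) = (asc (a :: t)).+2 by [].
under eq_bigr do rewrite /weight /last_entry last_rcons asc_rcons zeros_rcons.
rewrite geometric_ext_sum.
have -> : minn (asc (a :: t)).+2 (last a t).+1 = (last a t).+1.
  by apply/minn_idPr; rewrite ltnS.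
rewrite /weight /last_entry [last 0%N _]/= expr1n exprMn !exprS.
ring.
Qed.

Lemma Gcoef_succ r m (u v z : R) : (r < m)%N ->
  (v - 1) * Gcoef r m.+1 u v z - v * (1 - u) * Gcoef r m u v z =
  ((v - 1) * z - v) * Gcoef r m u 1 z + u * v ^+ 2 * Gcoef r m (u * v) 1 z.
Proof.
move=> hrm; rewrite !Gcoef_ascent_seqs Gsum_succ //.
rewrite !mulr_sumr -sumrB -big_split.
rewrite big_seq_cond [RHS]big_seq_cond; apply: eq_bigr => s.
rewrite mem_ascent_seqs => /andP [/andP [/eqP hs hasc] _].
by case: s hs hasc => [hs|a t _ /ext_weight_sum]; first by rewrite -hs in hrm.
Qed.

End Coefficients.

Theorem lemma2 (R : comNzRingType) (r : nat) (hr : (1 <= r)%N) (u v z : R) (n : nat) :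
  (v - 1) * Gcoef r n u v z - v * (1 - u) * tGcoef r n u v z =
  (v - 1) * u * v * z ^+ r * (n == r.+1)%:R
  + ((v - 1) * z - v) * tGcoef r n u 1 z
  + u * v ^+ 2 * tGcoef r n (u * v) 1 z.
Proof.
case: n => [|m].
  by rewrite /tGcoef Gcoef_small //= mulr0n !mulr0 subr0 !addr0.
rewrite /tGcoef eqSS; case: (ltngtP m r) => [hmr|hrm|hmr].
- rewrite !Gcoef_small ?(ltnW hmr) //.
  by rewrite mulr0n !mulr0 subr0 !addr0.
- by rewrite mulr0n mulr0 add0r Gcoef_succ.
- subst m; case: r hr => [//|r _].
  rewrite Gcoef_base !Gcoef_small //.
  by rewrite !mulr0 subr0 !addr0 mulr1 !mulrA.
Qed.
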